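(* Let $0\le r\le n$, $A\in\mathcal{A}_{n+1,r+1}$, and fix a tiling of $\Gamma(X(A))$. Consider the labels of the northwest boundary edges at the termination of the fusion-exchange algorithm applied to $A$, and let $L$ and $J$ be two such labels with $J\succ L$. Then: (i) if $L$ and $J$ both label horizontal edges, the edge labeled $J$ is east of the edge labeled $L$; (ii) if $L$ and $J$ both label vertical edges, the edge labeled $J$ is south of the edge labeled $L$; (iii) if $L$ and $J$ both label diagonal edges, the edge labeled $J$ is north of the edge labeled $L$.
   Context: Words and diagrams. For $0\le r\le n$ let $B_n^r$ be the set of words $X\in\{H,L,0\}^n$ with exactly $r$ letters $L$. If $X$ has $k$ letters $H$, $r$ letters $L$ and $\ell$ letters $0$, its rhombic diagram $\Gamma(X)$ is the closed region bounded by two paths of unit steps, using the directions west (horizontal), south (vertical) and southwest (diagonal: a fixed unit vector strictly between west and south), both going from a point $P$ to a point $Q$: the northwest boundary consists of $\ell$ west steps, then $r$ southwest steps, then $k$ south steps; the southeast boundary is obtained by reading $X$ left to right and taking a west step for each $0$, a southwest step for each $L$, a south step for each $H$. A tiling of $\Gamma(X)$ is a tiling by unit rhombi of three kinds: squares (horizontal and vertical edges), tall rhombi (vertical and diagonal edges), short rhombi (horizontal and diagonal edges). Each tile has two edges on its lower-right side: its east edge (vertical for squares and tall rhombi, diagonal for short rhombi) and its south edge (horizontal for squares and short rhombi, diagonal for tall rhombi); the parallel edges on its upper-left side are its west and north edges. Assemblées. An assemblée of size $(m,s)$ is a collection of $s$ nonempty, pairwise disjoint, linearly ordered sets (blocks)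 with union $\{1,\dots,m\}$; the last element of a block is its block-end. Blocks are listed in the canonical order with decreasing block-ends, and the assemblée is identified with the concatenated word. $\mathcal{A}_{m,s}$ is the set of these. For $A\in\mathcal{A}_{n+1,r+1}$ with block-ends $b_1>\dots>b_{r+1}$, a non-block-end element $x$ is an increase if $x+1$ appears to the right of $x$ in $A$, and a decrease otherwise (so $n+1$, if not a block-end, is a decrease). $X(A)\in B_n^r$ is obtained from $A$ by deleting its last letter $b_{r+1}$ and replacing each increase by $H$, each decrease by $0$ and each remaining block-end by $L$. Fusion-exchange algorithm. A label is a finite, possibly empty, set of consecutive integers; for labels $E,S$ write $E\succ S$ if both are nonempty and $\min E=\max S+1$. Given $A\in\mathcal{A}_{n+1,r+1}$ and a tiling of $\Gamma(X(A))$: initially the southeast boundary edges, in order from $P$ to $Q$, receive the singleton labels of the letters of $A$ from left to right, $b_{r+1}$ omitted. Step: choose a tile whose east and south edges are labeled, say by $E$ and $S$, and whose west and north edges are not. (R I) If $E\succ S$ and the south edge is horizontal: west edge gets $E\cup S$, north edge gets $\emptyset$, place $\alpha$ in the tile. (R II) If $S\succ E$ and the east edge is vertical: north edge gets $E\cup S$, west edge gets $\emptyset$, place $\beta$. (R III) Otherwise: west edge gets $E$, north edge gets $S$, and place $q$ if $E\ne\emptyset$ and $S\ne\emptyset$. Repeat until every edge is labeled (termination). *)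

From HB Require Import structures.
From mathcomp Require Import all_boot.
Set Implicit Arguments. Unset Strict Implicit. Unset Printing Implicit Defensive.

(* lH = letter H (south step), lL = letter L (southwest step),
   l0 = letter 0 (west step). *)
Inductive letter := lH | lL | l0.

Definition letter_eqb (a b : letter) : bool :=
  match a, b with lH, lH | lL, lL | l0, l0 => true | _, _ => false end.
Lemma letter_eqP : Equality.axiom letter_eqb.
Proof. by case; case; constructor. Qed.
HB.instance Definition _ := hasDecEq.Build letter letter_eqP.

(* Order 0 < L < H : the northwest boundary word is 0^l L^r H^k. *)
Definition lrank (c : letter) : nat :=
  match c with l0 => 0 | lL => 1 | lH => 2 end.

Definition nw_word (X : seq letter) : seq letter :=
  nseq (count_mem l0 X) l0 ++ nseq (count_mem lL X) lL ++ nseq (count_mem lH X) lH.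

(* A tile whose east and
   south edges are consecutive edges i, i+1 of the current path has lower-right
   side  "H 0" (square), "H L" (tall rhombus) or "L 0" (short rhombus); adding it
   replaces these two edges by its upper-left side "0 H", "L H", "0 L", i.e. the
   two letters are swapped.  After the swap, edge i is the tile's north edge and
   edge i+1 its west edge.  A tiling of Gamma(X) is encoded by a sequence of such
   flips (an order in which its tiles can be added) leading from the southeast
   boundary X to the northwest boundary. *)
Definition swap_at (T : Type) (x0 : T) (s : seq T) (i : nat) : seq T :=
  set_nth x0 (set_nth x0 s i (nth x0 s i.+1)) i.+1 (nth x0 s i).

Definition valid_flip (w : seq letter) (i : nat) : bool :=
  (i.+1 < size w) && (lrank (nth l0 w i.+1) < lrank (nth l0 w i)).

Fixpoint sweep (w : seq letter) (fs : seq nat) : option (seq letter) :=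
  match fs with
  | [::] => Some w
  | i :: fs' => if valid_flip w i then sweep (swap_at l0 w i) fs' else None
  end.

Definition tiling_of (X : seq letter) (fs : seq nat) : Prop :=
  sweep X fs = Some (nw_word X).

(* A label is a finite set of integers, represented by a list of its elements. *)
Definition label := seq nat.
Definition lmin (E : label) : nat := \big[minn/head 0 E]_(x <- E) x.
Definition lmax (E : label) : nat := \max_(x <- E) x.
Definition lsucc (E S : label) : bool :=
  [&& E != [::], S != [::] & lmin E == (lmax S).+1].

(* An assemblee of size (m,s) is given by its list of blocks in canonical order. *)
Definition is_assemblee (m s : nat) (B : seq (seq nat)) : Prop :=
  [/\ size B = s, all (fun b => b != [::]) B,
      perm_eq (flatten B) (iota 1 m) &
      sorted (fun x y => y < x) (map (last 0) B)].

Definition aword (B : seq (seq nat)) : seq nat := flatten B.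
Definition block_ends (B : seq (seq nat)) : seq nat := map (last 0) B.

Definition is_increase (B : seq (seq nat)) (x : nat) : bool :=
  (x.+1 \in aword B) && (index x (aword B) < index x.+1 (aword B)).

Definition aword_init (B : seq (seq nat)) : seq nat :=
  take (size (aword B)).-1 (aword B).

Definition XA (B : seq (seq nat)) : seq letter :=
  map (fun x => if x \in block_ends B then lL
                else if is_increase B x then lH else l0) (aword_init B).

Definition fe_step (w : seq letter) (lab : seq label) (i : nat) : seq label :=
  let E := nth [::] lab i in
  let S := nth [::] lab i.+1 in
  if lsucc E S && (nth l0 w i.+1 == l0) then
    set_nth [::] (set_nth [::] lab i [::]) i.+1 (E ++ S)
  else if lsucc S E && (nth l0 w i == lH) then
    set_nth [::] (set_nth [::] lab i (E ++ S)) i.+1 [::]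
  else
    set_nth [::] (set_nth [::] lab i S) i.+1 E.

Fixpoint fe_run (w : seq letter) (lab : seq label) (fs : seq nat) : seq label :=
  match fs with
  | [::] => lab
  | i :: fs' => fe_run (swap_at l0 w i) (fe_step w lab i) fs'
  end.

(* Final labels of the northwest boundary edges, listed from P to Q. *)
Definition fe_final (B : seq (seq nat)) (fs : seq nat) : seq label :=
  fe_run (XA B) (map (fun x => [:: x]) (aword_init B)) fs.

From mathcomp Require Import all_boot zify.
Set Implicit Arguments. Unset Strict Implicit. Unset Printing Implicit Defensive.

(* Along the current boundary path of the fusion-exchange algorithm, every
   label is a set of consecutive integers, and any two edges e before f
   (counted from P), labeled E and F, are compatible: E and F are disjoint, F
   lies below E if both edges are diagonal, e is not horizontal if F ≻ E, and
   f is not vertical if E ≻ F.  On the southeast boundary this holds because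
   block-ends decrease along A, a letter x with x + 1 to its right is an
   increase or a block-end, and one with x + 1 to its left is not an increase.
   A tile of rule III exchanges two compatible labels; rules I and II replace
   them by ∅ and E ∪ S, and E ∪ S is compatible with every label compatible
   with both E and S (for diagonal edges because labels are intervals).  On
   the northwest boundary, compatibility of the edges labeled L and J is the
   claim. *)

Lemma pairwise_filterE (T : Type) (r : rel T) (a : pred T) (s : seq T) :
  pairwise r (filter a s) = pairwise (fun x y => a x ==> a y ==> r x y) s.
Proof.
elim: s => //= x s IH; rewrite fun_if /= all_filter IH.
by case: (a x) => //=; rewrite all_predT.
Qed.

Lemma sorted_subseq_pairwise (T : eqType) (r : rel T) (s t : seq T) :
  transitive r -> uniq t -> subseq s t -> sorted r s ->
  pairwise (fun x y => (x \in s) ==> (y \in s) ==> r x y) t.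
Proof.
move=> r_tr uniq_t /(subseq_uniqP uniq_t) sE.
by rewrite -pairwise_filterE -sE -sorted_pairwise.
Qed.

Lemma lmin_mem E : E != [::] -> lmin E \in E.
Proof.
case: E => // e E _; rewrite /lmin /= big_seq.
by elim/big_ind: _ => [|x y|//]; [exact: mem_head | case: leqP].
Qed.

Lemma geq_lmin E x : x \in E -> lmin E <= x.
Proof.
rewrite /lmin; move: (head 0 E) => i.
elim: E => // y E IH; rewrite inE big_cons geq_min.
by case/orP=> [/eqP->|/IH->]; rewrite ?leqnn ?orbT.
Qed.

Lemma leq_lmax E x : x \in E -> x <= lmax E.
Proof. by move=> xE; apply: leq_bigmax_seq. Qed.

Lemma lmax_mem E : E != [::] -> lmax E \in E.
Proof.
elim: E => // e E IH _; rewrite /lmax big_cons -/(lmax E) inE.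
have [->|nE] := eqVneq E [::]; first by rewrite /lmax big_nil maxn0 eqxx.
by case: leqP; rewrite ?IH ?eqxx ?orbT.
Qed.

Lemma lmin_unique m E : m \in E -> {in E, forall x, m <= x} -> lmin E = m.
Proof.
move=> mE m_le; apply/eqP; rewrite eqn_leq geq_lmin //= m_le // lmin_mem //.
by apply/eqP => E0; rewrite E0 in mE.
Qed.

Lemma lmax_unique m E : m \in E -> {in E, forall x, x <= m} -> lmax E = m.
Proof.
move=> mE le_m; apply/eqP; rewrite eqn_leq leq_lmax // andbT.
by apply/bigmax_leqP_seq => x xE _; apply: le_m.
Qed.

Lemma lsucc1 x y : lsucc [:: x] [:: y] = (x == y.+1).
Proof. by rewrite /lsucc /lmin /lmax /= !big_cons !big_nil minnn maxn0. Qed.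

Definition lt_label (L J : label) : Prop := forall x y, x \in L -> y \in J -> x < y.

Lemma lsucc_lt_label J L : lsucc J L -> lt_label L J.
Proof.
case/and3P=> _ _ /eqP succ x y xL yJ.
by have := leq_lmax xL; have := geq_lmin yJ; lia.
Qed.

Lemma lsucc_not_lt_label J L : lsucc J L -> ~ lt_label J L.
Proof.
move=> /[dup] /and3P[nJ nL _] /lsucc_lt_label ltLJ ltJL.
have := ltLJ _ _ (lmin_mem nL) (lmin_mem nJ).
by have := ltJL _ _ (lmin_mem nJ) (lmin_mem nL); lia.
Qed.

Definition consecutive (E : label) : Prop :=
  forall x y z, x \in E -> y \in E -> x <= z <= y -> z \in E.

Lemma consecutive_eq_mem E E' : E =i E' -> consecutive E -> consecutive E'.
Proof. by move=> eqE cE x y z; rewrite -!eqE; apply: cE. Qed.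

Lemma consecutive_cat Up Lo :
  consecutive Up -> consecutive Lo -> lsucc Up Lo -> consecutive (Up ++ Lo).
Proof.
move=> cUp cLo /[dup] /and3P[nUp nLo /eqP succ] /lsucc_lt_label ltLoUp x y z.
rewrite !mem_cat => /orP[xUp|xLo] /orP[yUp|yLo] xzy.
- by rewrite (cUp x y).
- by have := ltLoUp _ _ yLo xUp; lia.
- have [zLo|zUp] := leqP z (lmax Lo).
    by rewrite (cLo x (lmax Lo)) ?lmax_mem ?orbT //; lia.
  by rewrite (cUp (lmin Up) y) ?lmin_mem //; lia.
- by rewrite (cLo x y) ?orbT.
Qed.

Lemma lt_label_lower l Up Lo :
  consecutive Lo -> {in Lo, forall x, x \notin l} -> lsucc Up Lo ->
  lt_label l Up -> lt_label l Lo.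
Proof.
move=> cLo disj /and3P[nUp nLo /eqP succ] ltUp y x yl xLo.
rewrite ltnNge; apply/negP => xy.
have yLo : y \in Lo.
  apply: (cLo x (lmax Lo)) => //; first exact: lmax_mem.
  by have := ltUp _ _ yl (lmin_mem nUp); lia.
by have := disj _ yLo; rewrite yl.
Qed.

Lemma lsucc_fused Up Lo U J : U =i Up ++ Lo -> lsucc Up Lo ->
  lsucc U J = lsucc Lo J /\ lsucc J U = lsucc J Up.
Proof.
move=> eqU /[dup] /and3P[nUp nLo _] /lsucc_lt_label ltLoUp.
have minU : lmin U = lmin Lo.
  apply: lmin_unique => [|x]; rewrite eqU mem_cat ?lmin_mem ?orbT //.
  by case/orP=> [xUp|/geq_lmin//]; exact: ltnW (ltLoUp _ _ (lmin_mem nLo) xUp).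
have maxU : lmax U = lmax Up.
  apply: lmax_unique => [|x]; rewrite eqU mem_cat ?lmax_mem //.
  by case/orP=> [/leq_lmax//|xLo]; exact: ltnW (ltLoUp _ _ xLo (lmax_mem nUp)).
have nU : U != [::].
  by apply/eqP => U0; move: (eqU (lmin Up)); rewrite U0 in_nil mem_cat lmin_mem.
by rewrite /lsucc minU maxU nU nUp nLo.
Qed.

Definition compatible (e f : letter * label) : Prop :=
  [/\ {in e.2, forall x, x \notin f.2},
      e.1 = lL -> f.1 = lL -> lt_label f.2 e.2,
      lsucc f.2 e.2 -> e.1 <> l0 &
      lsucc e.2 f.2 -> f.1 <> lH].

Lemma compatible_nil_l c e : compatible (c, [::]) e.
Proof. by split=> //=; rewrite /lsucc ?eqxx ?andbF. Qed.

Lemma compatible_nil_r e c : compatible e (c, [::]).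
Proof. by split=> //=; rewrite /lsucc ?eqxx ?andbF. Qed.

Lemma compatible_singletons a b x y :
  x != y -> (a = lL -> b = lL -> y < x) -> (y = x.+1 -> a <> l0) ->
  (x = y.+1 -> b <> lH) -> compatible (a, [:: x]) (b, [:: y]).
Proof.
move=> xy diag horiz vert; split=> /= [z|aL bL u v|+|]; rewrite ?lsucc1.
- by rewrite !inE => /eqP->.
- by rewrite !inE => /eqP-> /eqP->; apply: diag.
- by move/eqP.
- by move/eqP.
Qed.

Lemma compatible_fuse_l e u o Up Lo U : U =i Up ++ Lo -> lsucc Up Lo ->
  compatible e (u, Up) -> compatible e (o, Lo) -> compatible e (u, U).
Proof.
case: e => c l eqU succ [/= dUp diagUp _ vertUp] [/= dLo _ horizLo _].
have [succUl succlU] := lsucc_fused l eqU succ.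
have nUp : Up != [::] by case/and3P: succ.
split=> /= [x xl|cL uL y x|+|+]; rewrite ?succUl ?succlU //.
- by rewrite eqU mem_cat negb_or dUp ?dLo.
- rewrite eqU mem_cat => /orP[yUp|yLo] xl; first exact: diagUp.
  apply: ltn_trans (diagUp cL uL _ _ (lmin_mem nUp) xl).
  exact: lsucc_lt_label succ _ _ yLo (lmin_mem nUp).
Qed.

Lemma compatible_fuse_r e u o Up Lo U : U =i Up ++ Lo -> consecutive Lo ->
  lsucc Up Lo -> compatible (u, Up) e -> compatible (o, Lo) e -> compatible (u, U) e.
Proof.
case: e => c l eqU cLo succ [/= dUp diagUp horizUp _] [/= dLo _ _ vertLo].
have [succUl succlU] := lsucc_fused l eqU succ.
split=> /= [x|uL cL y x yl|+|+]; rewrite ?succUl ?succlU //.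
- by rewrite eqU mem_cat => /orP[/dUp|/dLo].
- rewrite eqU mem_cat => /orP[xUp|xLo]; first exact: diagUp.
  exact: lt_label_lower cLo dLo succ (diagUp uL cL) _ _ yl xLo.
Qed.

Section PairwiseUpdate.

Variables (T : Type) (C : T -> Prop) (R : T -> T -> Prop).

Definition pairwise_on (f : nat -> T) : Prop :=
  (forall k, C (f k)) /\ (forall p q, p < q -> R (f p) (f q)).

Definition inherits (x y z : T) : Prop :=
  (forall e, R e x -> R e y -> R e z) /\ (forall e, R x e -> R y e -> R z e).

Lemma inheritsC x y z : inherits x y z -> inherits y x z.
Proof. by case=> l r; split=> e ? ?; [apply: l | apply: r]. Qed.

Lemma pairwise_on_update2 f g i : pairwise_on f ->
  (forall k, k != i -> k != i.+1 -> g k = f k) ->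
  C (g i) -> C (g i.+1) -> R (g i) (g i.+1) ->
  inherits (f i) (f i.+1) (g i) -> inherits (f i) (f i.+1) (g i.+1) ->
  pairwise_on g.
Proof.
move=> [Cf Rf] gf Ci Ci1 Rii1 [li ri] [li1 ri1]; split=> [k|p q].
  have [->|ki] := eqVneq k i => //; have [->|ki1] := eqVneq k i.+1 => //.
  by rewrite gf.
have [->|pi] := eqVneq p i; [|have [->|pi1] := eqVneq p i.+1].
- have [->//|qi1] := eqVneq q i.+1 => ?.
  by rewrite (gf q); [apply: ri; apply: Rf | |]; lia.
- by move=> ?; rewrite (gf q); [apply: ri1; apply: Rf | |]; lia.
- rewrite (gf p) //.
  have [->|qi] := eqVneq q i => [?|]; first by apply: li; apply: Rf; lia.
  have [->|qi1] := eqVneq q i.+1 => ?; first by apply: li1; apply: Rf; lia.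
  by rewrite gf //; apply: Rf.
Qed.

End PairwiseUpdate.

Definition entry (w : seq letter) (lab : seq label) (k : nat) : letter * label :=
  (nth l0 w k, nth [::] lab k).

Definition fe_invariant (w : seq letter) (lab : seq label) : Prop :=
  pairwise_on (fun e : letter * label => consecutive e.2) compatible (entry w lab).

Definition tile_labels (a b : letter) (E S : label) : label * label :=
  if lsucc E S && (b == l0) then ([::], E ++ S)
  else if lsucc S E && (a == lH) then (E ++ S, [::])
  else (S, E).

Lemma fe_stepE w lab i :
  let t := tile_labels (nth l0 w i) (nth l0 w i.+1)
                       (nth [::] lab i) (nth [::] lab i.+1) in
  fe_step w lab i = set_nth [::] (set_nth [::] lab i t.1) i.+1 t.2.
Proof. by rewrite /fe_step /tile_labels /=; case: ifP => // _; case: ifP. Qed.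

Lemma nth_set_nth2 (T : Type) (x0 : T) s i a b k :
  nth x0 (set_nth x0 (set_nth x0 s i a) i.+1 b) k =
  if k == i then a else if k == i.+1 then b else nth x0 s k.
Proof.
rewrite nth_set_nth /= nth_set_nth /=; have [->|//] := eqVneq k i.
by rewrite (ltn_eqF (ltnSn i)).
Qed.

Lemma inherits_nil x y c : inherits compatible x y (c, [::]).
Proof. by split=> e _ _; [apply: compatible_nil_r | apply: compatible_nil_l]. Qed.

Lemma tile_labels_spec a b E S :
  lrank b < lrank a -> consecutive E -> consecutive S -> compatible (a, E) (b, S) ->
  let t := tile_labels a b E S in
  [/\ consecutive t.1, consecutive t.2, compatible (b, t.1) (a, t.2),
      inherits compatible (a, E) (b, S) (b, t.1) &
      inherits compatible (a, E) (b, S) (a, t.2)].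
Proof.
move=> ba cE cS compatES; rewrite /tile_labels.
case: ifP => [/andP[succES /eqP b0]|notI].
  have eqU : E ++ S =i E ++ S by [].
  split=> //=; [exact: consecutive_cat | exact: compatible_nil_l | |].
    exact: inherits_nil.
  split=> e eE eS /=; first exact: compatible_fuse_l eqU succES eE eS.
  exact: compatible_fuse_r eqU cS succES eE eS.
case: ifP => [/andP[succSE /eqP aH]|notII].
  have eqU : E ++ S =i S ++ E by move=> x; rewrite !mem_cat orbC.
  split=> //=; [|exact: compatible_nil_r| |exact: inherits_nil].
    by apply: consecutive_eq_mem (consecutive_cat cS cE succSE) => x; rewrite eqU.
  apply: inheritsC; split=> e eS eE /=.
    exact: compatible_fuse_l eqU succSE eS eE.
  exact: compatible_fuse_r eqU cE succSE eS eE.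
case: compatES => /= disj _ _ _; split=> //=.
split=> /= [x xS|bL aL|succ b0|succ aH].
- by apply/negP => xE; have := disj x xE; rewrite xS.
- by move: ba; rewrite bL aL.
- by move: notI; rewrite succ b0.
- by move: notII; rewrite succ aH.
Qed.

Lemma fe_step_invariant w lab i : valid_flip w i -> fe_invariant w lab ->
  fe_invariant (swap_at l0 w i) (fe_step w lab i).
Proof.
case/andP=> _ ba inv; have [consec compat] := inv.
have := tile_labels_spec ba (consec i) (consec i.+1) (compat i i.+1 (ltnSn i)).
rewrite fe_stepE; set t := tile_labels _ _ _ _ => -[? ? ? ? ?].
have entryE k :
    entry (swap_at l0 w i) (set_nth [::] (set_nth [::] lab i t.1) i.+1 t.2) k =
    if k == i then (nth l0 w i.+1, t.1)
    else if k == i.+1 then (nth l0 w i, t.2) else entry w lab k.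
  by rewrite /entry /swap_at !nth_set_nth2; case: (k == i) => //; case: (k == i.+1).
apply: (pairwise_on_update2 (i := i) inv);
  rewrite ?entryE ?eqxx ?(gtn_eqF (ltnSn i)) //.
by move=> k ki ki1; rewrite entryE (negPf ki) (negPf ki1).
Qed.

Lemma fe_run_invariant fs w lab w' : fe_invariant w lab -> sweep w fs = Some w' ->
  fe_invariant w' (fe_run w lab fs).
Proof.
elim: fs w lab => [|i fs IH] w lab inv /=; first by case=> <-.
by case: ifP => // flip; apply: IH; apply: fe_step_invariant.
Qed.

Lemma fe_invariant_singletons (g : nat -> letter) (s : seq nat) :
  (forall p q, p < q < size s ->
     compatible (g (nth 0 s p), [:: nth 0 s p]) (g (nth 0 s q), [:: nth 0 s q])) ->
  fe_invariant (map g s) (map (fun x => [:: x]) s).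
Proof.
move=> compat_s.
have labE k : nth [::] (map (fun x => [:: x]) s) k =
    if k < size s then [:: nth 0 s k] else [::].
  by case: ltnP => ks; [rewrite (nth_map 0) | rewrite nth_default ?size_map].
split=> [k|p q pq]; rewrite /entry !labE.
  by case: ifP => _ x y z //; rewrite !inE => /eqP-> /eqP-> ?; apply/eqP; lia.
case: (ltnP q (size s)) => qs; last exact: compatible_nil_r.
have ps := ltn_trans pq qs.
by rewrite ps !(nth_map 0) //; apply: compat_s; rewrite pq.
Qed.

Lemma subseq_block_ends B :
  all (fun b => b != [::]) B -> subseq (block_ends B) (aword B).
Proof.
elim: B => //= b B IH /andP[nb nB]; case/lastP: b nb => // b z _.
rewrite last_rcons -cats1 -catA -[_ :: _]cat0s; apply: cat_subseq (sub0seq b) _.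
by rewrite /= eqxx IH.
Qed.

Lemma fe_invariant_XA m s B : is_assemblee m s B ->
  fe_invariant (XA B) (map (fun x => [:: x]) (aword_init B)).
Proof.
case=> _ nonempty permA sorted_ends.
have uniqA : uniq (aword B) by rewrite (perm_uniq permA) iota_uniq.
have ends_dec := sorted_subseq_pairwise (rev_trans ltn_trans) uniqA
  (subseq_block_ends nonempty) sorted_ends.
pose g z := if z \in block_ends B then lL else if is_increase B z then lH else l0.
have gL z : g z = lL -> z \in block_ends B by rewrite /g; case: ifP => // _; case: ifP.
have g0 z : is_increase B z -> g z <> l0 by rewrite /g => ->; case: ifP.
have gH z : ~~ is_increase B z -> g z <> lH by rewrite /g => /negPf->; case: ifP.
apply: (@fe_invariant_singletons g) => p q /andP[pq].
rewrite size_take_min => qI.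
have qA : q < size (aword B) by lia.
have pA : p < size (aword B) by lia.
rewrite /aword_init !nth_take; try lia.
set x := nth 0 (aword B) p; set y := nth 0 (aword B) q.
have ip : index x (aword B) = p by apply: index_uniq.
have iq : index y (aword B) = q by apply: index_uniq.
apply: compatible_singletons.
- by rewrite nth_uniq ?(ltn_eqF pq).
- move=> /gL xe /gL ye; move/(pairwiseP 0): ends_dec => /(_ p q pA qA pq).
  by rewrite xe ye.
- by move=> yx; apply: g0; rewrite /is_increase -yx mem_nth // ip iq.
- by move=> xy; apply: gH; rewrite /is_increase -xy ip iq ltnNge (ltnW pq) andbF.
Qed.

Unset Implicit Arguments. Set Strict Implicit.

Theorem lemma3p5 (n r : nat) (B : seq (seq nat)) (fs : seq nat) :
  r <= n ->
  is_assemblee n.+1 r.+1 B ->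
  tiling_of (XA B) fs ->
  forall p q : nat, p < n -> q < n ->
  lsucc (nth [::] (fe_final B fs) q) (nth [::] (fe_final B fs) p) ->
  let W := nw_word (XA B) in
  [/\ (nth l0 W p = l0 -> nth l0 W q = l0 -> q < p),
      (nth l0 W p = lH -> nth l0 W q = lH -> p < q) &
      (nth l0 W p = lL -> nth l0 W q = lL -> q < p)].
Proof.
move=> _ assemblee tiling p q _ _ succ W.
have [_ compat] : fe_invariant W (fe_final B fs) :=
  fe_run_invariant (fe_invariant_XA assemblee) tiling.
have [pq|qp|ep] := ltngtP p q.
- have [_ diag horiz _] := compat p q pq; split=> // Wp Wq.
    by case: (horiz succ).
  by case: (lsucc_not_lt_label succ (diag Wp Wq)).
- have [_ _ _ vert] := compat q p qp; split=> // Wp.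
  by case: (vert succ).
- by rewrite ep in succ; case: (lsucc_not_lt_label succ (lsucc_lt_label succ)).
Qed.
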